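(* Let $A_R$ be a calibrated $R$-superalgebra with basis $B^A$ and let $e\in\mathfrak a_R$ be an idempotent such that $be=b$ or $be=0$ for every $b\in B^A$. Then $\tilde\Gamma^d(\mathrm{Col}_n(A_Re))\simeq T^A(n,d)_R\,\eta^{e^d}_{1^d,1^d}$ (even isomorphism of left $T^A(n,d)_R$-supermodules), where $\eta^{e^d}_{1^d,1^d}=(\xi^e_{1,1})^{\otimes d}$.
   Context: Let $R$ be a principal ideal domain of characteristic $0$. A calibrated $R$-supermodule is a free finite-rank $R$-supermodule $V$ with a decomposition $V_{\bar0}=V_{\mathfrak a}\oplus V_{\mathfrak c}$ into free submodules; with bases $B_{\mathfrak a},B_{\mathfrak c},B_{\bar1}$ and a total order on their union $B$, $\mathfrak S_d$ acts on $V^{\otimes d}$ by $(v_1\otimes\cdots\otimes v_d)^\sigma=(-1)^{\langle\sigma;\mathbf v\rangle}v_{\sigma1}\otimes\cdots\otimes v_{\sigma d}$ ($\langle\sigma;\mathbf v\rangle$ = number of $k<l$ with $\sigma^{-1}k>\sigma^{-1}l$, $v_k,v_l$ odd); for a $d$-tuple $\mathbf b$ of basis elements in which only even ones repeat, $y_{\mathbf b}=\prod_{b\in B_{\mathfrak c}}\#\{k:b_k=b\}!\cdot\sum_{\mathbf b'}(-1)^{\langle\mathbf b\rangle+\langle\mathbf b'\rangle}b'_1\otimes\cdots\otimes b'_d$ (sum over distinct place-permutations $\mathbf b'$; $\langle\mathbf b\rangle$ = number of $k<l$ with $b_k,b_l$ odd, $b_k>b_l$), and $\tilde\Gamma^dV=\mathrm{span}_R\{y_{\mathbf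 b}\}$. A calibrated $R$-superalgebra is a free finite-rank $R$-superalgebra $A_R$ with $A_{R,\bar0}=\mathfrak a_R\oplus\mathfrak c_R$ (free), $\mathfrak a_R$ a unital subalgebra, with bases $B^A_{\mathfrak a},B^A_{\mathfrak c},B^A_{\bar1}$, $B^A$ their union. $M_n(A_R)$ is the matrix superalgebra with basis $\xi^b_{r,s}$ ($b\in B^A$ in position $(r,s)$), calibrated by $M_n(\mathfrak a_R)$, $M_n(\mathfrak c_R)$; $T^A(n,d)_R=\tilde\Gamma^dM_n(A_R)$, a unital subsuperalgebra of $M_n(A_R)^{\otimes d}$ (Koszul sign product). For a calibrated $A_R$-supermodule $V$ (i.e. $\mathfrak a_RV_{\mathfrak a}\subseteq V_{\mathfrak a}$), $\mathrm{Col}_n(V)=V^{\oplus n}$ (column vectors) is a left $M_n(A_R)$-supermodule, calibrated by $\mathrm{Col}_n(V_{\mathfrak a})$, $\mathrm{Col}_n(V_{\mathfrak c})$, and $\tilde\Gamma^d\mathrm{Col}_n(V)$ is a left $T^A(n,d)_R$-supermodule via the natural (Koszul-signed) action of $M_n(A_R)^{\otimes d}$ on $\mathrm{Col}_n(V)^{\otimes d}$. Here $A_Re$ is calibrated with $(A_Re)_{\mathfrak a}=\mathfrak a_Re$, $(A_Re)_{\mathfrak c}=\mathfrak c_Re$. *)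

(* Concrete coordinate model of free calibrated supermodules:
   a free module with finite basis T is {ffun T -> R}; its d-th tensor power
   is {ffun d.-tuple T -> R} (coordinates on the tensor basis). *)
From HB Require Import structures.
From mathcomp Require Import all_boot all_algebra.
Set Implicit Arguments.
Unset Strict Implicit.
Unset Printing Implicit Defensive.
Import GRing.Theory.
Local Open Scope ring_scope.

(* kind of a basis element: in B_a, in B_c, or odd (B_1) *)
Inductive kind := Ka | Kc | Ko.
Definition kodd k := if k is Ko then true else false.
Definition kA k := if k is Ka then true else false.
Definition kC k := if k is Kc then true else false.

Definition strict_total (T : finType) (lt : rel T) :=
  [/\ irreflexive lt, transitive lt & forall x y, x != y -> lt x y || lt y x].

Definition char0 (R : idomainType) := forall m : nat, (m%:R : R) = 0 -> m = 0%N.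

Definition is_ideal (R : idomainType) (S : R -> Prop) :=
  [/\ S 0, (forall x y, S x -> S y -> S (x + y)) & (forall a x, S x -> S (a * x))].
Definition PID (R : idomainType) :=
  forall S : R -> Prop, is_ideal S -> exists g : R, forall x, S x <-> exists a, x = a * g.

Section Tensor.
Variables (R : idomainType) (T : finType) (od isc : pred T) (lt : rel T) (d : nat).

Definition oinv (t : d.-tuple T) : nat :=
  #|[pred kl : 'I_d * 'I_d | [&& (kl.1 < kl.2)%N, od (tnth t kl.1),
        od (tnth t kl.2) & lt (tnth t kl.2) (tnth t kl.1)]]|.

Definition cfact (t : d.-tuple T) : nat := (\prod_(c : T | isc c) (count_mem c t)`!)%N.

(* y_b, as a coordinate vector on the tensor basis; the distinct place-
   permutations b' of b are exactly the tuples t with perm_eq t b *)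
Definition ytens (b : d.-tuple T) : {ffun d.-tuple T -> R} :=
  [ffun t : d.-tuple T => if perm_eq t b then (-1) ^+ (oinv b + oinv t) * (cfact b)%:R else 0].

Definition admissible (b : d.-tuple T) := uniq (filter od b).

(* v lies in the R-span of the y_b, b ranging over admissible tuples of basis
   elements satisfying P (P selects the basis of the module: here either all of
   T, or a subset of T spanning a calibrated submodule) *)
Definition inGamma (P : pred T) (v : {ffun d.-tuple T -> R}) :=
  exists c : {ffun d.-tuple T -> R},
    v = [ffun t : d.-tuple T => \sum_(b : d.-tuple T | admissible b && all P b) c b * ytens b t].

Definition tpar (t : d.-tuple T) : bool := odd (count od t).
Definition homog (p : bool) (v : {ffun d.-tuple T -> R}) :=
  forall t, v t != 0 -> tpar t = p.
End Tensor.

(* Koszul sign for (x_1 (x) .. (x) x_d)(y_1 (x) .. (x) y_d):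
   (-1)^{sum_{l<k} |x_k| |y_l|} *)
Definition ksgn (R : idomainType) (T1 T2 : finType) (o1 : pred T1) (o2 : pred T2) (d : nat)
  (u : d.-tuple T1) (w : d.-tuple T2) : R :=
  (-1) ^+ #|[pred kl : 'I_d * 'I_d | [&& (kl.1 < kl.2)%N, o1 (tnth u kl.2) & o2 (tnth w kl.1)]]|.

(* Koszul-signed action of T1^{(x)d} on T2^{(x)d}, given the structure constants
   c a b z = coefficient of basis element z in a . b *)
Definition tact (R : idomainType) (T1 T2 : finType) (o1 : pred T1) (o2 : pred T2)
  (c : T1 -> T2 -> T2 -> R) (d : nat)
  (x : {ffun d.-tuple T1 -> R}) (v : {ffun d.-tuple T2 -> R}) : {ffun d.-tuple T2 -> R} :=
  [ffun z : d.-tuple T2 => \sum_(u : d.-tuple T1) \sum_(w : d.-tuple T2)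
      x u * v w * ksgn R o1 o2 u w * \prod_(k < d) c (tnth u k) (tnth w k) (tnth z k)].

Section Superalgebra.
Variables (R : idomainType) (I : finType) (kd : I -> kind) (mu : I -> I -> I -> R).

(* the algebra A_R with basis I; b_i b_j = sum_k mu i j k b_k *)
Definition smulA (x y : {ffun I -> R}) : {ffun I -> R} :=
  [ffun k : I => \sum_i \sum_j x i * y j * mu i j k].
Definition supp_in (P : pred I) (x : {ffun I -> R}) := forall i, x i != 0 -> P i.
Definition basisv (b : I) : {ffun I -> R} := [ffun k : I => (k == b)%:R].
Definition bodd (i : I) := kodd (kd i).
Definition inA (i : I) := kA (kd i).

(* associative unital superalgebra, homogeneous basis, a_R unital subalgebra *)
Definition calibrated_superalgebra (one : {ffun I -> R}) :=
  [/\ (forall x y z, smulA (smulA x y) z = smulA x (smulA y z)),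
      (forall x, smulA one x = x /\ smulA x one = x),
      (forall i j k, mu i j k != 0 -> bodd k = bodd i (+) bodd j),
      supp_in inA one &
      (forall i j k, inA i -> inA j -> mu i j k != 0 -> inA k)].

Variable n : nat.
(* basis xi^b_{r,s} of M_n(A_R) indexed by ((b, r), s) *)
Definition Modd (x : I * 'I_n * 'I_n) := bodd x.1.1.
Definition MC (x : I * 'I_n * 'I_n) := kC (kd x.1.1).
Definition muM (x y z : I * 'I_n * 'I_n) : R :=
  if [&& x.2 == y.1.2, z.1.2 == x.1.2 & z.2 == y.2] then mu x.1.1 y.1.1 z.1.1 else 0.
(* basis of Col_n(A_R): (b, r) = b in row r; action of M_n(A_R) *)
Definition Codd (v : I * 'I_n) := bodd v.1.
Definition CC (v : I * 'I_n) := kC (kd v.1).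
Definition actC (x : I * 'I_n * 'I_n) (v z : I * 'I_n) : R :=
  if (x.2 == v.2) && (z.2 == x.1.2) then mu x.1.1 v.1 z.1 else 0.
(* basis of Col_n(A_R e): those (b, r) with b e = b *)
Definition Pe (e : {ffun I -> R}) (v : I * 'I_n) := smulA (basisv v.1) e == basisv v.1.

Variable d : nat.
(* T^A(n,d)_R = Gamma~^d M_n(A_R) inside M_n(A_R)^{(x)d} *)
Definition inTA (ltM : rel (I * 'I_n * 'I_n)) := @inGamma R _ Modd MC ltM d predT.
Definition mulT := tact Modd Modd muM (d := d).
Definition actT := tact Modd Codd actC (d := d).
(* Gamma~^d Col_n(A_R e) inside Col_n(A_R)^{(x)d} *)
Definition inGCol (ltC : rel (I * 'I_n)) (e : {ffun I -> R}) := @inGamma R _ Codd CC ltC d (Pe e).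
(* eta^{e^d}_{1^d,1^d} = (xi^e_{1,1})^{(x)d}, i1 the first row/column index *)
Definition etaT (e : {ffun I -> R}) (i1 : 'I_n) : {ffun d.-tuple (I * 'I_n * 'I_n) -> R} :=
  [ffun z => \prod_(k < d) (if ((tnth z k).1.2 == i1) && ((tnth z k).2 == i1)
                            then e (tnth z k).1.1 else 0)].
Definition inTeta ltM e i1 (w : {ffun d.-tuple (I * 'I_n * 'I_n) -> R}) :=
  exists2 x, inTA ltM x & w = mulT x (etaT e i1).
End Superalgebra.

(* Read a column vector as the first column of a matrix: the basis element b in
   row r of Col_n(A e) becomes xi^b_{r,1}, and a tensor in Col_n(A e)^{(x)d} is
   extended by zero off the first column.  Right multiplication by
   eta = (xi^e_{1,1})^{(x)d} involves no Koszul signs since e is even, and because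
   b e is b or 0 it is the projection onto the tensors of basis elements xi^b_{r,1}
   with b e = b.  The image of y_b under the extension is y_{b'} for the lifted
   tuple b', computed with the order pulled back from M_n(A); this equals y_b for
   the given order, because the parity of <b> + <b'> computed for two orders is
   the parity of the number of odd pairs on which the orders disagree, a
   permutation invariant.  Hence the extension maps Gamma~^d Col_n(A e) onto
   T^A(n,d) eta, and it is equivariant because M_n(A) acts on columns with the
   same structure constants. *)

From HB Require Import structures.
From mathcomp Require Import all_boot all_algebra perm.
Set Implicit Arguments.
Unset Strict Implicit.
Unset Printing Implicit Defensive.
Import GRing.Theory.
Local Open Scope ring_scope.

Section PairCount.
Variables (T : finType) (d : nat).

Definition pair_count (Q : rel T) (t : d.-tuple T) : nat :=
  #|[pred kl : 'I_d * 'I_d | (kl.1 < kl.2)%N && Q (tnth t kl.1) (tnth t kl.2)]|.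

Lemma card_natE (A : finType) (P : pred A) : #|P| = (\sum_(a : A) (P a : nat))%N.
Proof. by rewrite -sum1_card big_mkcond; apply: eq_bigr => a _; rewrite unfold_in; case: (P a). Qed.

(* Each unordered pair {k, l} of places is counted once on each side. *)
Lemma pair_countE (Q : rel T) (t : d.-tuple T) : irreflexive Q -> symmetric Q ->
  (2 * pair_count Q t = \sum_(kl : 'I_d * 'I_d) (Q (tnth t kl.1) (tnth t kl.2) : nat))%N.
Proof.
move=> Qirr Qsym; rewrite /pair_count card_natE mul2n -addnn.
rewrite [X in (_ + X)%N](reindex_inj (h := fun kl : 'I_d * 'I_d => (kl.2, kl.1))); last first.
  by move=> [k l] [k' l'] [-> ->].
rewrite -big_split; apply: eq_bigr => [[k l]] _ /=; rewrite (Qsym (tnth t l)).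
case: (ltngtP k l) => [||/val_inj ->] //=; first by rewrite addn0.
by rewrite Qirr.
Qed.

Lemma pair_count_perm (Q : rel T) (t b : d.-tuple T) :
  irreflexive Q -> symmetric Q -> perm_eq t b -> pair_count Q t = pair_count Q b.
Proof.
move=> Qirr Qsym /tuple_permP[p Ep].
have -> : t = [tuple tnth b (p i) | i < d] by apply: val_inj.
apply/eqP; rewrite -(eqn_pmul2l (isT : (0 < 2)%N)); apply/eqP.
rewrite !pair_countE // [in RHS](reindex_inj (h := fun kl : 'I_d * 'I_d => (p kl.1, p kl.2))).
  by apply/eq_bigr => kl _; rewrite !tnth_mktuple.
by move=> [k l] [k' l'] [/perm_inj -> /perm_inj ->].
Qed.
End PairCount.

Lemma strict_total_asym (T : finType) (lt : rel T) : strict_total lt ->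
  forall a c, a != c -> lt a c = ~~ lt c a.
Proof.
case=> irr tr tot a c /(tot a c); case: (boolP (lt a c)) => [hac _ | _ /= -> //].
by apply/esym/negP => /(tr _ _ _ hac); rewrite irr.
Qed.

Section OrderIndependence.
Variables (T : finType) (od : pred T) (lt1 lt2 : rel T).
Hypotheses (lt1_total : strict_total lt1) (lt2_total : strict_total lt2).

Definition odd_disagree : rel T := fun a c => [&& od a, od c & lt1 c a (+) lt2 c a].

Lemma odd_disagree_irr : irreflexive odd_disagree.
Proof.
by case: lt1_total => irr1 _ _; case: lt2_total => irr2 _ _ a; rewrite /odd_disagree irr1 irr2 !andbF.
Qed.

Lemma odd_disagree_sym : symmetric odd_disagree.
Proof.
move=> a c; have [-> // | ne] := eqVneq a c.
rewrite /odd_disagree (strict_total_asym lt1_total ne) (strict_total_asym lt2_total ne).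
by case: (od a); case: (od c); case: (lt1 c a); case: (lt2 c a).
Qed.

(* A pair inverted for both orders contributes 2, one inverted for exactly one
   order contributes 1. *)
Lemma odd_oinvD d (t : d.-tuple T) :
  odd (oinv od lt1 t + oinv od lt2 t) = odd (pair_count odd_disagree t).
Proof.
pose both (kl : 'I_d * 'I_d) := [&& (kl.1 < kl.2)%N, od (tnth t kl.1), od (tnth t kl.2),
                    lt1 (tnth t kl.2) (tnth t kl.1) & lt2 (tnth t kl.2) (tnth t kl.1)].
suff -> : (oinv od lt1 t + oinv od lt2 t =
           pair_count odd_disagree t + 2 * \sum_(kl : 'I_d * 'I_d) (both kl : nat))%N.
  by rewrite oddD oddM addbF.
rewrite /oinv /pair_count !card_natE -big_split big_distrr -big_split /=.
apply: eq_bigr => kl _; rewrite /odd_disagree /both.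
move: (kl.1 < kl.2)%N (od (tnth t kl.1)) (od (tnth t kl.2))
  (lt1 (tnth t kl.2) (tnth t kl.1)) (lt2 (tnth t kl.2) (tnth t kl.1)).
by do 5! case.
Qed.

Lemma ytens_order_indep (R : idomainType) (isc : pred T) d (b : d.-tuple T) :
  ytens R od isc lt1 b = ytens R od isc lt2 b.
Proof.
apply/ffunP => t; rewrite !ffunE; case: ifP => // tb; congr (_ * _).
rewrite -signr_odd -[RHS]signr_odd !oddD; congr (_ ^+ nat_of_bool _).
have := odd_oinvD t; rewrite (pair_count_perm odd_disagree_irr odd_disagree_sym tb).
rewrite -odd_oinvD !oddD.
by case: (odd (oinv od lt1 t)); case: (odd (oinv od lt2 t));
   case: (odd (oinv od lt1 b)); case: (odd (oinv od lt2 b)).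
Qed.
End OrderIndependence.

Section GammaCombination.
Variables (R : idomainType) (T : finType) (od isc : pred T) (lt : rel T) (d : nat).

Definition gamma_comb (P : pred T) (c : {ffun d.-tuple T -> R}) : {ffun d.-tuple T -> R} :=
  [ffun t => \sum_(b : d.-tuple T | admissible od b && all P b) c b * ytens R od isc lt b t].

Lemma ytens_perm (b t : d.-tuple T) : ytens R od isc lt b t != 0 -> perm_eq t b.
Proof. by rewrite ffunE; case: ifP; rewrite ?eqxx. Qed.

Lemma ytens_eq0_all (S : pred T) (b t : d.-tuple T) :
  all S t != all S b -> ytens R od isc lt b t = 0.
Proof. by apply: contraNeq => /ytens_perm /perm_all ->. Qed.

Lemma gamma_comb_out (P : pred T) c (t : d.-tuple T) : ~~ all P t -> gamma_comb P c t = 0.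
Proof.
move=> Pt; rewrite ffunE big1 // => b /andP[_ Pb].
by rewrite (@ytens_eq0_all P) ?mulr0 // Pb (negbTE Pt).
Qed.

Lemma gamma_combE (P S : pred T) c (t : d.-tuple T) : all S t ->
  gamma_comb P c t =
  \sum_(b : d.-tuple T | admissible od b && all P b && all S b) c b * ytens R od isc lt b t.
Proof.
move=> St; rewrite ffunE [RHS]big_mkcondr; apply: eq_bigr => b _.
by case: (boolP (all S b)) => // Sb; rewrite (@ytens_eq0_all S) ?mulr0 // St (negbTE Sb).
Qed.
End GammaCombination.

Lemma sum_tuple_prod (R : comPzSemiRingType) (T : finType) d (G : 'I_d -> T -> R) :
  \sum_(w : d.-tuple T) \prod_(k < d) G k (tnth w k) = \prod_(k < d) \sum_(y : T) G k y.
Proof.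
rewrite bigA_distr_bigA (reindex (fun f : {ffun 'I_d -> T} => [tuple f k | k < d])) /=.
  by apply: eq_bigr => f _; apply: eq_bigr => k _; rewrite tnth_mktuple.
exists (fun w : d.-tuple T => [ffun k => tnth w k]) => [f _ | w _].
  by apply/ffunP => k; rewrite ffunE tnth_mktuple.
by apply: eq_from_tnth => k; rewrite tnth_mktuple ffunE.
Qed.

Lemma prodr_nat_bool (R : comPzSemiRingType) (I : finType) (P : pred I) :
  \prod_(i : I) (P i)%:R = [forall i, P i]%:R :> R.
Proof.
case: (boolP [forall i, P i]) => [/forallP PI | /forallPn[i Pi]].
  by rewrite big1 // => i _; rewrite PI.
by rewrite (bigD1 i) //= (negbTE Pi) mul0r.
Qed.

(* An even pure tensor commutes past every factor, so all Koszul signs are 1. *)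
Lemma tact_even_pure (R : idomainType) (T1 T2 : finType) (o1 : pred T1) (o2 : pred T2)
    (c : T1 -> T2 -> T2 -> R) d (x : {ffun d.-tuple T1 -> R}) (g : T2 -> R) :
  (forall y, g y != 0 -> ~~ o2 y) ->
  tact o1 o2 c x [ffun w : d.-tuple T2 => \prod_(k < d) g (tnth w k)] =
  [ffun z => \sum_(u : d.-tuple T1)
               x u * \prod_(k < d) \sum_(y : T2) g y * c (tnth u k) y (tnth z k)].
Proof.
move=> g_even; apply/ffunP => z; rewrite !ffunE; apply: eq_bigr => u _.
rewrite -sum_tuple_prod big_distrr; apply: eq_bigr => w _.
rewrite ffunE big_split /= -!mulrA; congr (_ * _).
have [-> | gw_neq0] := eqVneq (\prod_(k < d) g (tnth w k)) 0; first by rewrite !mul0r.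
suff -> : ksgn R o1 o2 u w = 1 by rewrite mul1r.
rewrite /ksgn (@eq_card0 _ _) ?expr0 // => kl; rewrite !inE.
have /g_even/negbTE -> : g (tnth w kl.1) != 0.
  by apply: contraNneq gw_neq0 => gk0; rewrite (bigD1 kl.1) //= gk0 mul0r.
by rewrite !andbF.
Qed.

Section FirstColumn.
Variables (R : idomainType) (I : finType) (kd : I -> kind) (mu : I -> I -> I -> R)
  (n : nat) (i1 : 'I_n) (d : nat).

Local Notation TC := (I * 'I_n)%type.
Local Notation TM := (I * 'I_n * 'I_n)%type.

Definition to_col1 (p : TC) : TM := (p, i1).
Definition to_col1T (t : d.-tuple TC) : d.-tuple TM := map_tuple to_col1 t.
Definition of_col1T (z : d.-tuple TM) : d.-tuple TC := map_tuple fst z.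
Definition in_col1 (z : d.-tuple TM) := all (fun p : TM => p.2 == i1) z.
Definition extend_col1 (v : {ffun d.-tuple TC -> R}) : {ffun d.-tuple TM -> R} :=
  [ffun z => if in_col1 z then v (of_col1T z) else 0].

Lemma to_col1_inj : injective to_col1.
Proof. by move=> p q [->]. Qed.

Lemma to_col1TK : cancel to_col1T of_col1T.
Proof. by move=> t; apply: val_inj; rewrite /= -map_comp map_id. Qed.

Lemma of_col1TK z : in_col1 z -> to_col1T (of_col1T z) = z.
Proof.
move=> /all_tnthP z1; apply: eq_from_tnth => k; rewrite !tnth_map.
by move: (z1 k); case: (tnth z k) => p s /= /eqP ->.
Qed.

Lemma in_col1T t : in_col1 (to_col1T t).
Proof. by apply/all_tnthP => k; rewrite tnth_map. Qed.

Definition col1_pred (P : pred TC) : pred TM := fun q => (q.2 == i1) && P q.1.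

Lemma all_col1_predE P (z : d.-tuple TM) : all (col1_pred P) z = in_col1 z && all P (of_col1T z).
Proof. by rewrite /in_col1 all_map -all_predI; apply: eq_all. Qed.

Lemma extend_col1T v t : extend_col1 v (to_col1T t) = v t.
Proof. by rewrite ffunE in_col1T to_col1TK. Qed.

Lemma extend_col1_linear (a : R) (u v : {ffun d.-tuple TC -> R}) :
  extend_col1 [ffun t => a * u t + v t] =
  [ffun z : d.-tuple TM => a * extend_col1 u z + extend_col1 v z].
Proof. by apply/ffunP => z; rewrite !ffunE; case: ifP; rewrite ?ffunE // mulr0 addr0. Qed.

Lemma extend_col1_inj : injective extend_col1.
Proof. by move=> u v uv; apply/ffunP => t; rewrite -!extend_col1T uv. Qed.

Lemma sum_col1 (F : d.-tuple TM -> R) : (forall z, ~~ in_col1 z -> F z = 0) ->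
  \sum_(z : d.-tuple TM) F z = \sum_(t : d.-tuple TC) F (to_col1T t).
Proof.
move=> F0; rewrite (bigID in_col1) /= [X in _ + X]big1 ?addr0; last by move=> z /F0.
rewrite (reindex_onto to_col1T of_col1T); last by move=> z /of_col1TK.
by apply: eq_bigl => t; rewrite in_col1T to_col1TK eqxx.
Qed.

Lemma extend_col1_act (x : {ffun d.-tuple TM -> R}) v :
  extend_col1 (actT kd mu x v) = mulT kd mu x (extend_col1 v).
Proof.
apply/ffunP => z; rewrite /mulT /actT /tact !ffunE.
under [RHS]eq_bigr => u _.
  rewrite (sum_col1 (F := fun w => x u * extend_col1 v w * _ * _)); last first.
    by move=> w /negbTE w1; rewrite ffunE w1 mulr0 !mul0r.
  under eq_bigr => w _ do rewrite extend_col1T.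
  over.
case: (boolP (in_col1 z)) => [z1 | ]; last first.
  rewrite /in_col1 -forallb_tnth => /forallPn[k zk1]; symmetry.
  apply: big1 => u _; apply: big1 => w _.
  by rewrite (bigD1 k) //= /muM tnth_map /= (negbTE zk1) !andbF mul0r mulr0.
apply: eq_bigr => u _; apply: eq_bigr => w _; congr (_ * _ * _).
  by rewrite /ksgn; congr (_ ^+ _); apply: eq_card => kl; rewrite !inE tnth_map.
apply: eq_bigr => k _; rewrite /muM /actC !tnth_map /=.
by move/all_tnthP: z1 => /(_ k) ->; rewrite andbT.
Qed.

Lemma extend_col1_homog (p : bool) v :
  homog (Codd kd (n:=n)) p v -> homog (Modd kd (n:=n)) p (extend_col1 v).
Proof.
move=> vp z; rewrite ffunE; case: ifP => _; last by rewrite eqxx.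
by move/vp; rewrite /tpar /= count_map.
Qed.
End FirstColumn.

Lemma strict_total_relpre (T U : finType) (f : T -> U) (lt : rel U) :
  injective f -> strict_total lt -> strict_total (relpre f lt).
Proof.
move=> f_inj [irr tr tot]; split=> [a | a b c | a c ne] /=; first exact: irr.
  exact: tr.
by apply: tot; rewrite (inj_eq f_inj).
Qed.

Section FirstColumnGamma.
Variables (R : idomainType) (I : finType) (kd : I -> kind) (mu : I -> I -> I -> R)
  (n : nat) (i1 : 'I_n) (d : nat) (ltM : rel (I * 'I_n * 'I_n)) (ltC : rel (I * 'I_n)).
Hypotheses (ltM_total : strict_total ltM) (ltC_total : strict_total ltC).

Local Notation TC := (I * 'I_n)%type.
Local Notation TM := (I * 'I_n * 'I_n)%type.
Local Notation to_col1 := (to_col1 i1).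
Local Notation to_col1T := (@to_col1T I n i1 d).

Lemma admissible_col1 (b : d.-tuple TC) :
  admissible (Modd kd (n:=n)) (to_col1T b) = admissible (Codd kd (n:=n)) b.
Proof. by rewrite /admissible /= filter_map map_inj_uniq //; apply: to_col1_inj. Qed.

Lemma oinv_col1 (b : d.-tuple TC) :
  oinv (Modd kd (n:=n)) ltM (to_col1T b) = oinv (Codd kd (n:=n)) (relpre to_col1 ltM) b.
Proof. by apply: eq_card => kl; rewrite !inE !tnth_map. Qed.

Lemma cfact_col1 (b : d.-tuple TC) :
  cfact (MC kd (n:=n)) (to_col1T b) = cfact (CC kd (n:=n)) b.
Proof.
rewrite /cfact (bigID (fun c : TM => c.2 == i1)) /= [X in (_ * X)%N]big1 ?muln1; last first.
  move=> c /andP[_ c1]; rewrite count_map (eq_count (a2 := pred0)) ?count_pred0 //.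
  by move=> p /=; apply/negbTE; apply: contra c1 => /eqP <-.
rewrite (reindex_onto to_col1 fst); last by move=> [p s] /andP[_ /eqP /= ->].
apply: eq_big => [p | p _]; first by rewrite /= !eqxx !andbT.
by rewrite count_map; congr (_ `!); apply: eq_count => q /=; rewrite (inj_eq (@to_col1_inj _ _ i1)).
Qed.

Lemma ytens_col1 (b t : d.-tuple TC) :
  ytens R (Modd kd (n:=n)) (MC kd (n:=n)) ltM (to_col1T b) (to_col1T t)
  = ytens R (Codd kd (n:=n)) (CC kd (n:=n)) ltC b t.
Proof.
have ltCM_total := strict_total_relpre (@to_col1_inj _ _ i1) ltM_total.
rewrite -(ytens_order_indep (Codd kd (n:=n)) ltCM_total ltC_total) !ffunE.
have -> : perm_eq (to_col1T t) (to_col1T b) = perm_eq t b.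
  by apply/idP/idP => [/(perm_map_inj (@to_col1_inj _ _ i1)) // | /(perm_map to_col1)].
by rewrite !oinv_col1 cfact_col1.
Qed.

Lemma gamma_comb_col1 (P : pred TC) (c : {ffun d.-tuple TM -> R}) (t : d.-tuple TC) :
  all P t ->
  gamma_comb (Modd kd (n:=n)) (MC kd (n:=n)) ltM predT c (to_col1T t) =
  gamma_comb (Codd kd (n:=n)) (CC kd (n:=n)) ltC P [ffun b => c (to_col1T b)] t.
Proof.
move=> Pt; rewrite (@gamma_combE _ _ _ _ _ _ _ (col1_pred i1 P)); last first.
  by rewrite all_col1_predE in_col1T to_col1TK.
rewrite ffunE (reindex_onto to_col1T (@of_col1T _ _ _)) => [|z]; last first.
  by rewrite all_col1_predE => /andP[_ /andP[/of_col1TK]].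
apply: eq_big => [b | b _]; last by rewrite ytens_col1 [in RHS]ffunE.
by rewrite admissible_col1 all_col1_predE in_col1T to_col1TK eqxx all_predT !andbT.
Qed.
End FirstColumnGamma.

Section RightMultiplicationByEta.
Variables (R : idomainType) (I : finType) (kd : I -> kind) (mu : I -> I -> I -> R)
  (e : {ffun I -> R}) (n : nat) (i1 : 'I_n) (d : nat).
Hypotheses (e_in_a : supp_in (inA kd) e)
  (be_dichotomy : forall b : I,
     smulA mu (basisv R b) e = basisv R b \/ smulA mu (basisv R b) e = 0).

Local Notation TM := (I * 'I_n * 'I_n)%type.

Definition xi_e (p : TM) : R := if (p.1.2 == i1) && (p.2 == i1) then e p.1.1 else 0.

Lemma etaTE : etaT d e i1 = [ffun z => \prod_(k < d) xi_e (tnth z k)].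
Proof. by []. Qed.

Lemma xi_e_even (p : TM) : xi_e p != 0 -> ~~ Modd kd p.
Proof.
rewrite /xi_e; case: ifP => [_ /e_in_a | _]; last by rewrite eqxx.
by rewrite /inA /Modd /bodd; case: (kd p.1.1).
Qed.

Lemma smulA_basisvl (x : {ffun I -> R}) (b k : I) :
  smulA mu (basisv R b) x k = \sum_(c : I) x c * mu b c k.
Proof.
rewrite ffunE (bigD1 b) //= [X in _ + X]big1 => [|i /negbTE ib]; last first.
  by apply: big1 => c _; rewrite ffunE ib !mul0r.
by rewrite addr0; apply: eq_bigr => c _; rewrite ffunE eqxx mul1r.
Qed.

Lemma basisv_mul_e (b b' : I) : smulA mu (basisv R b) e b' = ((b' == b) && Pe mu e (b, i1))%:R.
Proof.
rewrite /Pe /=; case: (be_dichotomy b) => ->; first by rewrite eqxx andbT ffunE.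
have [<- | _] := eqVneq b' b; last by rewrite ffunE.
suff /negbTE -> : 0 != basisv R b' by rewrite ffunE.
by apply/eqP => /ffunP /(_ b'); rewrite !ffunE eqxx => /eqP; rewrite eq_sym oner_eq0.
Qed.

Lemma sum_xi_e (F : TM -> R) : \sum_(t : TM) xi_e t * F t = \sum_(c : I) e c * F ((c, i1), i1).
Proof.
rewrite (eq_bigr (fun t : TM => xi_e (t.1, t.2) * F (t.1, t.2))) => [|[] //].
rewrite -(pair_bigA _ (fun a s => xi_e (a, s) * F (a, s))) /=.
rewrite (eq_bigr (fun a => xi_e (a, i1) * F (a, i1))) => [|a _]; last first.
  by rewrite (bigD1 i1) //= big1 ?addr0 // => s /negbTE s1; rewrite /xi_e /= s1 andbF mul0r.
rewrite (eq_bigr (fun a => xi_e ((a.1, a.2), i1) * F ((a.1, a.2), i1))) => [|[] //].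
rewrite -(pair_bigA _ (fun c r => xi_e ((c, r), i1) * F ((c, r), i1))) /=.
apply: eq_bigr => c _; rewrite (bigD1 i1) //= big1 ?addr0 => [|r /negbTE r1].
  by rewrite /xi_e /= eqxx.
by rewrite /xi_e /= r1 mul0r.
Qed.

(* xi^b_{r,s} xi^e_{1,1} = delta_{s,1} xi^{be}_{r,1} *)
Lemma xi_mul_xi_e (p q : TM) :
  \sum_(t : TM) xi_e t * muM mu p t q = ((p == q) && col1_pred i1 (Pe mu e) q)%:R.
Proof.
rewrite sum_xi_e; case: p q => [[b r] s] [[b' r'] s']; rewrite /muM /col1_pred /=.
transitivity (if [&& s == i1, r' == r & s' == i1] then smulA mu (basisv R b) e b' else 0).
  by case: ifP => _; rewrite ?smulA_basisvl // big1 // => c _; rewrite mulr0.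
rewrite basisv_mul_e !xpair_eqE /Pe /=.
have [<- | _] := eqVneq b' b; last by rewrite /= mulr0n if_same.
have [-> | _] := eqVneq s' i1; last by rewrite !(andbF, andFb).
by rewrite [r' == r]eq_sym /=; case: (s == i1); case: (r == r'); rewrite /= ?mulr0n.
Qed.

Lemma mulT_etaT (x : {ffun d.-tuple TM -> R}) :
  mulT kd mu x (etaT d e i1) =
  [ffun z : d.-tuple TM => if all (col1_pred i1 (Pe mu e)) z then x z else 0].
Proof.
rewrite /mulT etaTE tact_even_pure; last exact: xi_e_even.
apply/ffunP => z; rewrite !ffunE.
under eq_bigr => u _ do rewrite (eq_bigr _ (fun k _ => xi_mul_xi_e _ _)) prodr_nat_bool.
rewrite (bigD1 z) //= [X in _ + X]big1 ?addr0 => [|u uz].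
  rewrite (@eq_forallb _ _ (fun k => col1_pred i1 (Pe mu e) (tnth z k))) => [|k].
    by rewrite forallb_tnth; case: ifP; rewrite ?mulr1 ?mulr0.
  by rewrite eqxx.
case: forallP => [uz_eq | _]; last by rewrite mulr0.
by case/eqP: uz; apply: eq_from_tnth => k; case/andP: (uz_eq k) => /eqP.
Qed.
End RightMultiplicationByEta.

Section ExtendIntoEtaIdeal.
Variables (R : idomainType) (I : finType) (kd : I -> kind) (mu : I -> I -> I -> R)
  (e : {ffun I -> R}) (n : nat) (i1 : 'I_n) (d : nat)
  (ltM : rel (I * 'I_n * 'I_n)) (ltC : rel (I * 'I_n)).
Hypotheses (e_in_a : supp_in (inA kd) e)
  (be_dichotomy : forall b : I,
     smulA mu (basisv R b) e = basisv R b \/ smulA mu (basisv R b) e = 0)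
  (ltM_total : strict_total ltM) (ltC_total : strict_total ltC).

Local Notation TM := (I * 'I_n * 'I_n)%type.

Lemma mulT_gamma_etaT (c : {ffun d.-tuple TM -> R}) :
  mulT kd mu (gamma_comb (Modd kd (n:=n)) (MC kd (n:=n)) ltM predT c) (etaT d e i1) =
  extend_col1 i1 (gamma_comb (Codd kd (n:=n)) (CC kd (n:=n)) ltC (Pe mu e)
                    [ffun b => c (to_col1T i1 b)]).
Proof.
rewrite mulT_etaT //; apply/ffunP => z; rewrite ffunE [in RHS]ffunE all_col1_predE.
case z1: (in_col1 i1 z); last by [].
rewrite andTb -(of_col1TK z1) to_col1TK; case: ifP => Pt; last by rewrite gamma_comb_out ?Pt.
exact: gamma_comb_col1.
Qed.
End ExtendIntoEtaIdeal.

Unset Implicit Arguments.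
Set Strict Implicit.

Theorem lemma4p12 (R : idomainType) (hR0 : char0 R) (hPID : PID R)
  (I : finType) (kd : I -> kind) (mu : I -> I -> I -> R) (one : {ffun I -> R})
  (hA : calibrated_superalgebra kd mu one)
  (e : {ffun I -> R}) (he_a : supp_in (inA kd) e) (he : smulA mu e e = e)
  (hbe : forall b : I, smulA mu (basisv R b) e = basisv R b \/ smulA mu (basisv R b) e = 0)
  (n : nat) (hn : (0 < n)%N) (d : nat)
  (ltM : rel (I * 'I_n * 'I_n)) (hltM : strict_total ltM)
  (ltC : rel (I * 'I_n)) (hltC : strict_total ltC) :
  exists f : {ffun d.-tuple (I * 'I_n) -> R} -> {ffun d.-tuple (I * 'I_n * 'I_n) -> R},
    [/\ (* R-linear on Gamma~^d Col_n(A_R e) *)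
        (forall (a : R) u v, inGCol kd mu ltC e u -> inGCol kd mu ltC e v ->
           f [ffun t : d.-tuple (I * 'I_n) => a * u t + v t] = [ffun t : d.-tuple (I * 'I_n * 'I_n) => a * f u t + f v t]),
        (* maps into T^A(n,d)_R eta *)
        (forall v, inGCol kd mu ltC e v -> inTeta kd mu ltM e (Ordinal hn) (f v)),
        (* injective *)
        (forall u v, inGCol kd mu ltC e u -> inGCol kd mu ltC e v -> f u = f v -> u = v),
        (* surjective *)
        (forall w, inTeta kd mu ltM e (Ordinal hn) w -> exists2 v, inGCol kd mu ltC e v & f v = w) &
        (
        (* T^A(n,d)_R-equivariant *)
        (forall x v, inTA kd ltM x -> inGCol kd mu ltC e v ->
           f (actT kd mu x v) = mulT kd mu x (f v)) /\
        (* even *)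
        (forall (p : bool) v, inGCol kd mu ltC e v -> homog (Codd kd (n:=n)) p v ->
           homog (Modd kd (n:=n)) p (f v)))].
Proof.
set i1 := Ordinal hn.
exists (extend_col1 i1 (d := d)); split.
- by move=> a u v _ _; apply: extend_col1_linear.
- move=> v [c ->]; pose c' := [ffun b' => c (of_col1T b')].
  exists (gamma_comb (Modd kd (n:=n)) (MC kd (n:=n)) ltM predT c'); first by exists c'.
  rewrite (mulT_gamma_etaT i1 he_a hbe hltM hltC); congr (extend_col1 _ (gamma_comb _ _ _ _ _)).
  by apply/ffunP => b; rewrite !ffunE to_col1TK.
- by move=> u v _ _; apply: extend_col1_inj.
- move=> w [x [c ->] ->]; exists (gamma_comb (Codd kd (n:=n)) (CC kd (n:=n)) ltC (Pe mu e)
                                  [ffun b => c (to_col1T i1 b)]).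
    by exists [ffun b => c (to_col1T i1 b)].
  by rewrite (mulT_gamma_etaT i1 he_a hbe hltM hltC).
- split=> [x v _ _ | p v _]; first exact: extend_col1_act.
  exact: extend_col1_homog.
Qed.
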